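(* Let $i\ge 3$ and $k\ge 3$ be integers. Then: (a) $g_1(F_i,F_{i+2},F_{i+k})=(2F_i-1)F_{i+2}-F_i$ whenever $k\ge i+2$; (b) $g_1(F_i,F_{i+2},F_{2i+1})=(F_{i-2}-1)F_{i+2}+F_{2i+1}-F_i$; (c) $g_1(F_i,F_{i+2},F_{2i})=(F_i-1)F_{i+2}+F_{2i}-F_i$; (d) if $r=\lfloor (F_i-1)/F_k\rfloor\ge 1$ (equivalently $k\le i-1$), then $$g_1(F_i,F_{i+2},F_{i+k})=\begin{cases}(F_i-rF_k-1)F_{i+2}+(r+1)F_{i+k}-F_i & \text{if } (F_i-rF_k)F_{i+2}\ge F_{k-2}F_i,\\ (F_k-1)F_{i+2}+rF_{i+k}-F_i & \text{if } (F_i-rF_k)F_{i+2}< F_{k-2}F_i.\end{cases}$$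
   Context: Fibonacci numbers: $F_0=0$, $F_1=1$, $F_n=F_{n-1}+F_{n-2}$. For positive integers $a_1,\dots,a_l$ with $\gcd(a_1,\dots,a_l)=1$ and an integer $n$, let $d(n;a_1,\dots,a_l)$ be the number of tuples $(x_1,\dots,x_l)$ of nonnegative integers with $a_1x_1+\dots+a_lx_l=n$. For a nonnegative integer $p$, the $p$-Frobenius number $g_p(a_1,\dots,a_l)$ is the largest integer $n$ with $d(n;a_1,\dots,a_l)\le p$. *)

From mathcomp Require Import all_boot all_order all_algebra.
Set Implicit Arguments.
Unset Strict Implicit.
Unset Printing Implicit Defensive.
Import Order.TTheory GRing.Theory Num.Theory.

Fixpoint fib (n : nat) : nat :=
  match n with
  | 0 => 0
  | m.+1 => match m with
            | 0 => 1
            | k.+1 => fib m + fib k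
            end
  end.

(* For n >= 0 and all
   a_i >= 1, every solution has x_i <= n, so the tuples range over
   {ffun 'I_l -> 'I_(n+1)} without loss. *)
Definition dcount (a : seq nat) (n : int) : nat :=
  match n with
  | Posz m =>
      #|[set x : {ffun 'I_(size a) -> 'I_m.+1} |
           \sum_(j < size a) nth 0 a j * x j == m]|
  | Negz _ => 0
  end.

Definition is_pFrobenius (p : nat) (a : seq nat) (g : int) : Prop :=
  (dcount a g <= p)%N /\ (forall n : int, (g < n)%R -> (p < dcount a n)%N).

From mathcomp Require Import all_boot all_order all_algebra zify.
Import GRing.Theory.

Set Implicit Arguments.
Unset Strict Implicit.
Unset Printing Implicit Defensive.

(* Write a = F_i, b = F_(i+2), c = F_(i+k).  The identity
   F_(i+k) + F_(k-2) F_i = F_k F_(i+2) says c = f b - e a with f = F_k and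
   e = F_(k-2), so modulo a the generator c acts like f copies of b.  As b is
   invertible mod a, G is the 1-Frobenius number of (a, b, c) once G has a
   unique representation and every residue class mod a contains two distinct
   values x2 b + x3 c <= G + a: adding multiples of a then reaches every
   N > G twice.  Uniqueness comes from coprimality of a and b after trading
   c for f b - e a; the pairs (x2, x3) are exhibited explicitly, separately
   when c is beyond the Frobenius number of a and b (case (a)), when f >= a
   (cases (b), (c)) and when f < a (case (d), writing a = r f + v with
   0 < v <= f). *)

Lemma coprime_modn_mulr a b x y : coprime a b ->
  x * b = y * b %[mod a] -> x = y %[mod a].
Proof.
move=> cop_ab; wlog le_yx : x y / y <= x => [hwlog|].
  by case: (leqP y x) => [/hwlog//|/ltnW le_xy /esym/(hwlog _ _ le_xy)].
move/eqP; rewrite eqn_mod_dvd ?leq_mul2r ?le_yx ?orbT // -mulnBl.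
by rewrite Gauss_dvdl // -eqn_mod_dvd // => /eqP.
Qed.

Lemma coprime_lincomb_eq a b t x y w : coprime a b -> t < a ->
  y * a + x * b = t * b + a * w -> exists2 s, x = t + s * a & y + s * b = w.
Proof.
move=> cop_ab lt_ta eq_yx.
have a_gt0 : 0 < a by apply: leq_ltn_trans lt_ta.
have x_mod : x = t %[mod a].
  apply: (coprime_modn_mulr cop_ab).
  have := congr1 (modn^~ a) eq_yx.
  by rewrite modnMDl addnC [a * w]mulnC modnMDl.
exists (x %/ a); first by rewrite {1}(divn_eq x a) x_mod modn_small // addnC.
apply/eqP; rewrite -(eqn_pmul2l a_gt0); apply/eqP.
move: eq_yx; rewrite {1}(divn_eq x a) x_mod modn_small //; nia.
Qed.

Lemma dcount3E a b c N : dcount [:: a; b; c] N%:Z =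
  #|[set x : {ffun 'I_3 -> 'I_N.+1} |
     x ord0 * a + x (inord 1) * b + x (inord 2) * c == N]|.
Proof.
apply: eq_card => x; rewrite !inE !big_ord_recl big_ord0 addn0 addnA /=.
have -> : lift ord0 (ord0 : 'I_2) = inord 1 by apply/val_inj; rewrite /= inordK.
have -> : lift ord0 (lift ord0 (ord0 : 'I_1)) = inord 2.
  by apply/val_inj; rewrite /= inordK.
by rewrite ![_ * x _]mulnC.
Qed.

Lemma ord3P (j : 'I_3) : [\/ j = ord0, j = inord 1 | j = inord 2].
Proof.
by case: j => [[|[|[|//]]] lt_j3]; [apply: Or31 | apply: Or32 | apply: Or33];
  apply/val_inj; rewrite /= ?inordK.
Qed.

Lemma dcount3_le1 a b c N : 0 < a ->
  (forall x1 x2 x3 y1 y2 y3, x1 * a + x2 * b + x3 * c = N ->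
     y1 * a + y2 * b + y3 * c = N -> x2 = y2 /\ x3 = y3) ->
  dcount [:: a; b; c] N%:Z <= 1.
Proof.
move=> a_gt0 uniq_rep; rewrite dcount3E; apply/card_le1_eqP => x y.
rewrite !inE => /eqP rep_x /eqP rep_y.
have [eq2 eq3] := uniq_rep _ _ _ _ _ _ rep_x rep_y.
have eq1 : (x ord0 : nat) = y ord0.
  have := etrans rep_x (esym rep_y); rewrite eq2 eq3 => /addIn/addIn/eqP.
  by rewrite eqn_pmul2r // => /eqP.
by apply/ffunP => j; apply/val_inj; case: (ord3P j) => ->.
Qed.

Definition tuple3 N (x1 x2 x3 : nat) : {ffun 'I_3 -> 'I_N.+1} :=
  [ffun j : 'I_3 => inord (nth 0 [:: x1; x2; x3] j)].

Lemma dcount3_gt1 a b c N x1 x2 x3 y1 y2 y3 : 0 < a -> 0 < b -> 0 < c ->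
  x1 * a + x2 * b + x3 * c = N -> y1 * a + y2 * b + y3 * c = N ->
  (x2, x3) != (y2, y3) -> 1 < dcount [:: a; b; c] N%:Z.
Proof.
move=> a_gt0 b_gt0 c_gt0 rep_x rep_y neq_xy.
have tuple3E z1 z2 z3 : z1 * a + z2 * b + z3 * c = N ->
    [/\ tuple3 N z1 z2 z3 ord0 = z1 :> nat,
        tuple3 N z1 z2 z3 (inord 1) = z2 :> nat
      & tuple3 N z1 z2 z3 (inord 2) = z3 :> nat].
  move=> rep_z; have le_zN z d : 0 < d -> z * d <= N -> z < N.+1.
    by move=> d_gt0 le_zdN; apply: leq_trans le_zdN; rewrite leq_pmulr.
  have le_z1 : z1 < N.+1.
    by apply: (le_zN _ a); rewrite // -rep_z -addnA leq_addr.
  have le_z2 : z2 < N.+1.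
    by apply: (le_zN _ b); rewrite // -rep_z addnAC leq_addl.
  have le_z3 : z3 < N.+1 by apply: (le_zN _ c); rewrite // -rep_z leq_addl.
  by rewrite !ffunE /= !inordK.
have [x1E x2E x3E] := tuple3E _ _ _ rep_x.
have [y1E y2E y3E] := tuple3E _ _ _ rep_y.
rewrite dcount3E; apply/card_gt1P.
exists (tuple3 N x1 x2 x3), (tuple3 N y1 y2 y3).
rewrite !inE x1E x2E x3E y1E y2E y3E rep_x rep_y eqxx; split=> //.
apply: contra neq_xy => /eqP eq_xy.
have := congr1 (fun z : {ffun 'I_3 -> 'I_N.+1} =>
  (z (inord 1) : nat, z (inord 2) : nat)) eq_xy.
by rewrite x2E x3E y2E y3E => ->.
Qed.

Lemma coprime_residue_mulr a b N : 0 < a -> coprime a b ->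
  exists2 t, t < a & t * b = N %[mod a].
Proof.
case: b => [|b] a_gt0 cop_ab.
  exists 0 => //.
  by move: cop_ab; rewrite /coprime gcdn0 => /eqP->; rewrite !modn1.
have [u v def_ub _] := egcdnP a (ltn0Sn b).
exists ((N * u) %% a); first by rewrite ltn_pmod.
rewrite modnMml -mulnA def_ub gcdnC (eqP cop_ab).
by rewrite mulnDr muln1 mulnA modnMDl.
Qed.

Lemma eqmod_lift a m G N : m <= G + a -> G < N -> m = N %[mod a] ->
  exists x1, x1 * a + m = N.
Proof.
move=> le_m lt_GN eq_mN.
have le_mN : m <= N.
  rewrite leqNgt; apply/negP => lt_Nm.
  have : a %| m - N by rewrite -eqn_mod_dvd ?(ltnW lt_Nm) // eq_mN.
  by move/dvdn_leq; rewrite subn_gt0 => /(_ lt_Nm); lia.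
have /dvdnP [x1 def_x1] : a %| N - m by rewrite -eqn_mod_dvd // eq_mN.
by exists x1; rewrite -def_x1 subnK.
Qed.

Definition two_reps_below (a b c M t : nat) : Prop :=
  exists x2 x3 y2 y3, [/\ (x2, x3) != (y2, y3),
    x2 * b + x3 * c <= M, y2 * b + y3 * c <= M,
    x2 * b + x3 * c = t * b %[mod a] & y2 * b + y3 * c = t * b %[mod a]].

Lemma pFrobenius1_criterion a b c G p2 p3 :
  0 < a -> 0 < b -> 0 < c -> coprime a b ->
  (forall x1 x2 x3, x1 * a + x2 * b + x3 * c = G -> x2 = p2 /\ x3 = p3) ->
  (forall t, t < a -> two_reps_below a b c (G + a) t) ->
  is_pFrobenius 1 [:: a; b; c] G%:Z.
Proof.
move=> a_gt0 b_gt0 c_gt0 cop_ab uniq_G reps; split.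
  by apply: dcount3_le1 => // x1 x2 x3 y1 y2 y3 /uniq_G[-> ->] /uniq_G[-> ->].
case=> [N|//]; rewrite ltz_nat => lt_GN.
have [t lt_ta tbN] := coprime_residue_mulr N a_gt0 cop_ab.
have [x2 [x3 [y2 [y3 [neq_xy le_x le_y x_mod y_mod]]]]] := reps t lt_ta.
have [x1 rep_x] := eqmod_lift le_x lt_GN (etrans x_mod tbN).
have [y1 rep_y] := eqmod_lift le_y lt_GN (etrans y_mod tbN).
by apply: (@dcount3_gt1 a b c N x1 x2 x3 y1 y2 y3); rewrite // -addnA.
Qed.

Lemma pFrobenius1_large_third a b c : 0 < a -> 0 < b -> coprime a b ->
  (a - 1) * b + a * (b - 1) < c ->
  is_pFrobenius 1 [:: a; b; c] ((2 * a%:Z - 1) * b%:Z - a%:Z)%R.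
Proof.
move=> a_gt0 b_gt0 cop_ab lt_Gc.
have -> : ((2 * a%:Z - 1) * b%:Z - a%:Z)%R = Posz ((a - 1) * b + a * (b - 1)).
  by rewrite PoszD !PoszM -!subzn; lia.
apply: (@pFrobenius1_criterion _ _ _ _ (a - 1) 0) => //.
- exact: leq_ltn_trans (leq0n _) lt_Gc.
- move=> x1 x2 x3 rep_x.
  have x3_0 : x3 = 0.
    case: x3 rep_x => // x3 rep_x; have := leq_pmull c (ltn0Sn x3).
    by rewrite -(leq_add2l (x1 * a + x2 * b)) rep_x leqNgt ltn_addl.
  move: rep_x; rewrite x3_0 addn0 => rep_x.
  have lt_a1a : a - 1 < a by rewrite subn1 ltn_predL.
  have [s def_x2 def_x1] := coprime_lincomb_eq cop_ab lt_a1a rep_x.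
  have s_0 : s = 0.
    case: s def_x1 {def_x2} => // s; have := leq_pmull b (ltn0Sn s); lia.
  by rewrite def_x2 s_0 addn0.
- have def_Ga : (a - 1) * b + a * (b - 1) + a = (a - 1) * b + a * b.
    by rewrite -addnA -mulnSr !subn1 prednK.
  move=> t lt_ta; have le_t : t <= a - 1 by lia.
  exists t, 0, (t + a), 0; rewrite !mul0n !addn0 def_Ga; split.
  + by rewrite xpair_eqE eqxx andbT; lia.
  + by rewrite (leq_trans _ (leq_addr _ _)) // leq_mul2r le_t orbT.
  + by rewrite mulnDl leq_add2r leq_mul2r le_t orbT.
  + by [].
  + by rewrite mulnDl addnC [a * b]mulnC modnMDl.
Qed.

Lemma natz_sub_rel c e a f b : c + e * a = f * b ->
  Posz c = (f%:Z * b%:Z - e%:Z * a%:Z)%R.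
Proof. by move=> /(congr1 Posz); rewrite PoszD !PoszM => <-; rewrite addrK. Qed.

Section ThirdGeneratorRelation.

Variables a b c e f : nat.
Hypotheses (cop_ab : coprime a b) (def_c : c + e * a = f * b).

Lemma rep_shift t w x1 x2 x3 : t < a ->
  x1 * a + x2 * b + x3 * c = t * b + a * w ->
  exists2 s, x2 + x3 * f = t + s * a & x1 + s * b = w + x3 * e.
Proof.
move=> lt_ta rep_x; apply: (coprime_lincomb_eq cop_ab lt_ta).
have : x3 * (c + e * a) = x3 * (f * b) by rewrite def_c.
by move: rep_x; nia.
Qed.

Lemma rep_unique_shift t w : t < a -> t < f ->
  (forall s, 0 < s -> w + e * ((t + s * a) %/ f) < s * b) ->
  forall x1 x2 x3, x1 * a + x2 * b + x3 * c = t * b + a * w -> x2 = t /\ x3 = 0.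
Proof.
move=> lt_ta lt_tf small_w x1 x2 x3 /(rep_shift lt_ta) [s def_t def_w].
have f_gt0 : 0 < f by apply: leq_ltn_trans lt_tf.
case: (posnP s) => [s_0 | s_gt0].
  have x3_0 : x3 = 0 by case: x3 def_t def_w => // x3; rewrite s_0 mulSn; lia.
  by move: def_t; rewrite x3_0 s_0 !addn0.
have le_x3 : x3 <= (t + s * a) %/ f by rewrite leq_divRL // -def_t leq_addl.
have := small_w s s_gt0; rewrite ltnNge => /negP[].
apply: leq_trans (leq_addl x1 _) _.
by rewrite def_w leq_add2l mulnC leq_mul2l le_x3 orbT.
Qed.

Lemma pair_value x2 x3 : x2 * b + x3 * c + x3 * e * a = (x2 + x3 * f) * b.
Proof. by rewrite -addnA -mulnA -mulnDr def_c mulnDl mulnA. Qed.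

Lemma pair_value_mod x2 x3 t q : x2 + x3 * f = t + q * a ->
  x2 * b + x3 * c = t * b %[mod a].
Proof.
move=> def_t; have := modnMDl (x3 * e) (x2 * b + x3 * c) a.
by rewrite addnC pair_value def_t => <-; rewrite mulnDl mulnAC addnC modnMDl.
Qed.

(* Of the shifts s of rep_shift, s = 1 needs the exact quotient; for s >= 2
   the bound x3 f <= t + s a suffices. *)
Lemma rep_unique_narrow t w : t < a -> t < f ->
  w + e * ((t + a) %/ f) < b -> f * w + e * t < 2 * c ->
  forall x1 x2 x3, x1 * a + x2 * b + x3 * c = t * b + a * w -> x2 = t /\ x3 = 0.
Proof.
move=> lt_ta lt_tf small_w1 small_w2.
apply: rep_unique_shift => // -[//|[_|s _]]; first by rewrite !mul1n.
have f_gt0 : 0 < f by apply: leq_ltn_trans lt_tf.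
set q := _ %/ f; have le_qf : q * f <= t + s.+2 * a by apply: leq_trunc_div.
rewrite -(ltn_pmul2l f_gt0) mulnDr mulnCA.
apply: (@leq_trans (f * w + e * (t + s.+2 * a)).+1).
  by rewrite ltnS leq_add2l leq_mul2l [f * q]mulnC le_qf orbT.
have : s.+2 * (c + e * a) = s.+2 * (f * b) by rewrite def_c.
have : 2 * c <= s.+2 * c by rewrite leq_mul2r; lia.
nia.
Qed.

Lemma pFrobenius1_wide_f : 0 < a -> e < b -> a <= f ->
  (f - a) * b <= a * (b - e) ->
  is_pFrobenius 1 [:: a; b; c]
    ((2 * a%:Z - f%:Z - 1) * b%:Z + c%:Z - a%:Z)%R.
Proof.
move=> a_gt0 lt_eb le_af le_fab.
have -> : ((2 * a%:Z - f%:Z - 1) * b%:Z + c%:Z - a%:Z)%R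
    = Posz ((a - 1) * b + a * (b - e - 1)).
  by rewrite (natz_sub_rel def_c) PoszD !PoszM -!subzn; lia.
have lt_a1a : a - 1 < a by rewrite subn1 ltn_predL.
have ea_lt_fb : e * a < f * b.
  by apply: leq_trans (leq_mul le_af (leqnn b)); rewrite mulnC ltn_pmul2l.
apply: (@pFrobenius1_criterion _ _ _ _ (a - 1) 0) => //; [lia | lia | |].
- apply: rep_unique_shift => //; first lia.
  move=> [//|s] _; have le_div : (a - 1 + s.+1 * a) %/ f <= s.+1.
    rewrite -ltnS ltn_divLR; last lia.
    apply: leq_trans (_ : s.+2 * a <= _); last by rewrite leq_mul2l le_af orbT.
    by rewrite mulSn; lia.
  have : e * s <= s * b by rewrite mulnC leq_mul2l (ltnW lt_eb) orbT.
  by have := leq_mul (leqnn e) le_div; rewrite !mulnS mulSn; lia.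
- have def_Ga : (a - 1) * b + a * (b - e - 1) + a = (a - 1) * b + a * (b - e).
    by rewrite -addnA -mulnSr !subn1 prednK // subn_gt0.
  move=> t lt_ta; have le_t : t * b <= (a - 1) * b by rewrite leq_mul2r; lia.
  rewrite def_Ga; case: (leqP (f - a) t) => [le_ft | lt_tf].
    have def_y : (t - (f - a)) * b + 1 * c = t * b + a * (b - e).
      apply/eqP; rewrite -(eqn_add2r (e * a)) mul1n -addnA def_c -mulnDl.
      rewrite -addnA [e * a]mulnC -mulnDr subnK ?(ltnW lt_eb) // -mulnDl.
      by apply/eqP; congr (_ * _); lia.
    exists t, 0, (t - (f - a)), 1; rewrite def_y; split.
    + by rewrite xpair_eqE andbF.
    + by rewrite mul0n addn0 (leq_trans le_t) ?leq_addr.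
    + by rewrite leq_add2r.
    + by rewrite mul0n addn0.
    + by rewrite addnC [a * _]mulnC modnMDl.
  exists t, 0, (t + a), 0; rewrite !mul0n !addn0; split.
  + by rewrite xpair_eqE eqxx andbT; lia.
  + by rewrite (leq_trans le_t) ?leq_addr.
  + have : (t + 1) * b <= (f - a) * b by rewrite leq_mul2r; lia.
    have : (t + a) * b = (t + 1) * b + (a - 1) * b.
      by rewrite -mulnDl; congr (_ * _); lia.
    lia.
  + by [].
  + by rewrite mulnDl addnC [a * b]mulnC modnMDl.
Qed.

End ThirdGeneratorRelation.

Section NarrowF.

Variables a b c e f r v : nat.
Hypotheses (cop_ab : coprime a b) (def_c : c + e * a = f * b).
Hypotheses (def_a : a = r * f + v) (v_gt0 : 0 < v) (le_vf : v <= f).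
Hypotheses (r_gt0 : 0 < r) (e_gt0 : 0 < e) (le_2ef : 2 * e <= f).
Hypotheses (le_2ab : 2 * a <= b) (lt_afb : a + f < b).

Lemma narrow_lt_fa : f < a.
Proof. by rewrite def_a -addn1 leq_add ?leq_pmull. Qed.

Lemma narrow_le_4ea_fb : 4 * (e * a) <= f * b.
Proof. by move: (leq_mul le_2ef le_2ab); rewrite mulnACA. Qed.

Lemma narrow_lt_r1e_b : (r + 1) * e < b.
Proof.
have : (r + 1) * (2 * e) <= (r + 1) * f by rewrite leq_mul2l le_2ef orbT.
by rewrite mulnDl mul1n; lia.
Qed.

Lemma narrow_le_fb_2c : f * b <= 2 * c.
Proof. by have := narrow_le_4ea_fb; lia. Qed.

Lemma narrow_f_gt0 : 0 < f.
Proof. by apply: leq_trans le_2ef; rewrite muln_gt0. Qed.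

Lemma narrow_lt_2c t w : t < f -> w + e < b -> f * w + e * t < 2 * c.
Proof.
move=> lt_tf lt_web; apply: leq_trans narrow_le_fb_2c.
have : f * (w + e).+1 <= f * b by rewrite leq_mul2l lt_web orbT.
have : e * t <= e * f by rewrite leq_mul2l (ltnW lt_tf) orbT.
have := narrow_f_gt0; rewrite mulnS mulnDr; lia.
Qed.

Lemma rep_unique_high_v x1 x2 x3 :
  x1 * a + x2 * b + x3 * c = (f - 1) * b + a * (b - (r + 1) * e - 1) ->
  x2 = f - 1 /\ x3 = 0.
Proof.
have lt_fa := narrow_lt_fa; have f_gt0 := narrow_f_gt0.
have lt_r1e_b := narrow_lt_r1e_b.
apply: (rep_unique_narrow cop_ab def_c); [lia | lia | | ].
  have -> : f - 1 + a = (r + 1) * f + (v - 1) by rewrite def_a mulnDl; lia.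
  by rewrite divnMDl // divn_small ?addn0; lia.
by apply: narrow_lt_2c; [lia | move: lt_r1e_b; rewrite mulnDl; lia].
Qed.

Lemma rep_unique_low_v x1 x2 x3 : v < f ->
  x1 * a + x2 * b + x3 * c = (f - v - 1) * b + a * (b - r * e - 1) ->
  x2 = f - v - 1 /\ x3 = 0.
Proof.
move=> lt_vf; have lt_fa := narrow_lt_fa; have lt_r1e_b := narrow_lt_r1e_b.
have le_er : e <= r * e by rewrite leq_pmull.
apply: (rep_unique_narrow cop_ab def_c); [lia | lia | | ].
  have -> : f - v - 1 + a = r * f + (f - 1) by rewrite def_a; lia.
  by rewrite divnMDl ?divn_small ?addn0; lia.
by apply: narrow_lt_2c; move: lt_r1e_b; rewrite mulnDl; lia.
Qed.

Lemma two_reps_below_low_residue M t : t < f ->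
  (a + f - 1) * b <= M + (r + 1) * e * a ->
  (v < f -> (a + f - v - 1) * b <= M + r * e * a) ->
  two_reps_below a b c M t.
Proof.
move=> lt_tf le_M1 le_M2.
have le_r1ea : (r + 1) * e * a <= a * b.
  by rewrite mulnC leq_mul2l ltnW ?narrow_lt_r1e_b ?orbT.
have le_tM : t * b <= M.
  have : t * b + a * b <= (a + f - 1) * b by rewrite -mulnDl leq_mul2r; lia.
  lia.
case: (leqP f (t + v)) => [le_ftv | lt_tvf].
  have def_t : t + v - f + (r + 1) * f = t + 1 * a by rewrite def_a mulnDl; lia.
  have := pair_value def_c (t + v - f) (r + 1); rewrite def_t mul1n => val_y.
  have : (t + a) * b <= (a + f - 1) * b by rewrite leq_mul2r; lia.
  exists t, 0, (t + v - f), (r + 1); rewrite mul0n addn0; split=> //.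
  - by rewrite xpair_eqE addn1 /= andbF.
  - lia.
  - by have := pair_value_mod def_c def_t.
have def_t : t + v + r * f = t + 1 * a by rewrite def_a; lia.
have := pair_value def_c (t + v) r; rewrite def_t mul1n => val_y.
have : (t + a) * b <= (a + f - v - 1) * b by rewrite leq_mul2r; lia.
have := le_M2 (leq_ltn_trans (leq_addl t v) lt_tvf).
exists t, 0, (t + v), r; rewrite mul0n addn0; split=> //.
- by rewrite xpair_eqE (ltn_eqF r_gt0) andbF.
- lia.
- by have := pair_value_mod def_c def_t.
Qed.

Lemma high_residue_bound t q : 0 < q -> q <= r -> t < q.+1 * f -> t < a ->
  t * b + (r + 1) * e * a <= (a + f - 1) * b + (q - 1) * e * a.
Proof.
move=> q_gt0 le_qr lt_tqf lt_ta.
have le_4ea := narrow_le_4ea_fb; rewrite -!mulnA.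
have def_af : (a + f - 1) * b = (a - 1) * b + f * b.
  by rewrite -mulnDl; congr (_ * _); lia.
rewrite def_af; case: (ltnP q r) => [lt_qr | ge_qr]; last first.
  have -> : q = r by apply/eqP; rewrite eqn_leq le_qr.
  have : t * b <= (a - 1) * b by rewrite leq_mul2r; lia.
  have -> : (r + 1) * (e * a) = (r - 1) * (e * a) + 2 * (e * a).
    by rewrite -mulnDl; congr (_ * _); lia.
  lia.
have : t.+1 * b <= q.+1 * f * b by rewrite leq_mul2r lt_tqf orbT.
have : r.+1 * f * b <= (a - 1) * b + f * b.
  by rewrite -mulnDl leq_mul2r mulSn def_a; lia.
have : (r - q + 2) * (e * a) <= (r - q) * (f * b).
  apply: leq_trans (_ : (r - q) * (4 * (e * a)) <= _); last first.
    by rewrite leq_mul2l le_4ea orbT.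
  by rewrite [_ * (4 * _)]mulnA leq_mul2r; apply/orP; right; lia.
have -> : (r + 1) * (e * a) = (q - 1) * (e * a) + (r - q + 2) * (e * a).
  by rewrite -mulnDl; congr (_ * _); lia.
have -> : r.+1 * f * b = q.+1 * f * b + (r - q) * (f * b).
  by rewrite mulnA -mulnDl; congr (_ * _); lia.
rewrite mulSn; lia.
Qed.

Lemma two_reps_below_high_residue M t : f <= t -> t < a ->
  (a + f - 1) * b <= M + (r + 1) * e * a -> two_reps_below a b c M t.
Proof.
move=> le_ft lt_ta le_M1; have f_gt0 := narrow_f_gt0.
set q := t %/ f; set u := t %% f.
have def_t : u + q * f = t + 0 * a by rewrite addn0 addnC -divn_eq.
have q_gt0 : 0 < q by rewrite divn_gt0.
have le_qr : q <= r.
  by rewrite -ltnS ltn_divLR // mulSn; move: lt_ta; rewrite def_a; lia.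
have def_t' : u + f + (q - 1) * f = t + 0 * a.
  by rewrite -addnA -mulSn subn1 prednK.
have := pair_value def_c u q; rewrite def_t addn0 => val_x.
have := pair_value def_c (u + f) (q - 1); rewrite def_t' addn0 => val_y.
have : (q - 1) * e * a <= q * e * a by rewrite !leq_mul2r leq_subr !orbT.
have := high_residue_bound q_gt0 le_qr (ltn_ceil t f_gt0) lt_ta.
exists u, q, (u + f), (q - 1); split.
- by rewrite xpair_eqE negb_and; apply/orP; left; lia.
- lia.
- lia.
- by have := pair_value_mod def_c def_t.
- by have := pair_value_mod def_c def_t'.
Qed.

Lemma two_reps_below_narrow M t : t < a ->
  (a + f - 1) * b <= M + (r + 1) * e * a ->
  (v < f -> (a + f - v - 1) * b <= M + r * e * a) ->
  two_reps_below a b c M t.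
Proof.
move=> lt_ta le_M1 le_M2; case: (ltnP t f) => [lt_tf | le_ft].
  exact: two_reps_below_low_residue.
exact: two_reps_below_high_residue.
Qed.

Lemma narrow_gens_gt0 : [/\ 0 < a, 0 < b & 0 < c].
Proof.
have lt_fa := narrow_lt_fa.
have ea_gt0 : 0 < e * a by rewrite muln_gt0 e_gt0; lia.
by have := narrow_le_4ea_fb; split; lia.
Qed.

Lemma pFrobenius1_narrow_high_v : e * a <= v * b ->
  is_pFrobenius 1 [:: a; b; c] ((v%:Z - 1) * b%:Z + (r%:Z + 1) * c%:Z - a%:Z)%R.
Proof.
move=> le_ea_vb; have [a_gt0 b_gt0 c_gt0] := narrow_gens_gt0.
have lt_r1e_b := narrow_lt_r1e_b; have f_gt0 := narrow_f_gt0.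
have -> : ((v%:Z - 1) * b%:Z + (r%:Z + 1) * c%:Z - a%:Z)%R
    = Posz ((f - 1) * b + a * (b - (r + 1) * e - 1)).
  by rewrite (natz_sub_rel def_c) def_a !PoszD !PoszM -!subzn; lia.
apply: (@pFrobenius1_criterion _ _ _ _ (f - 1) 0) => //.
  exact: rep_unique_high_v.
have def_M : a * (b - (r + 1) * e - 1) + a + (r + 1) * e * a = a * b.
  by rewrite -mulnSr [_ * a]mulnC -mulnDr; congr (_ * _); lia.
have def_af : (a + f - 1) * b = (f - 1) * b + a * b.
  by rewrite -mulnDl; congr (_ * _); lia.
have def_afv : (a + f - 1) * b = (a + f - v - 1) * b + v * b.
  by rewrite -mulnDl; congr (_ * _); lia.
have def_r1ea : (r + 1) * e * a = r * e * a + e * a.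
  by rewrite -!mulnA mulnDl mul1n.
by move=> t lt_ta; apply: two_reps_below_narrow => //; lia.
Qed.

Lemma pFrobenius1_narrow_low_v : v * b < e * a ->
  is_pFrobenius 1 [:: a; b; c] ((f%:Z - 1) * b%:Z + r%:Z * c%:Z - a%:Z)%R.
Proof.
move=> lt_vb_ea; have [a_gt0 b_gt0 c_gt0] := narrow_gens_gt0.
have lt_vf : v < f.
  rewrite ltnNge; apply: contraL lt_vb_ea => le_fv; rewrite -leqNgt.
  by apply: leq_trans (leq_mul le_fv (leqnn b)); rewrite -def_c leq_addl.
have lt_re_b : r * e < b.
  by apply: leq_ltn_trans narrow_lt_r1e_b; rewrite leq_mul2r addn1 leqnSn orbT.
have -> : ((f%:Z - 1) * b%:Z + r%:Z * c%:Z - a%:Z)%R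
    = Posz ((f - v - 1) * b + a * (b - r * e - 1)).
  by rewrite (natz_sub_rel def_c) def_a !PoszD !PoszM -!subzn; lia.
apply: (@pFrobenius1_criterion _ _ _ _ (f - v - 1) 0) => //.
  by move=> x1 x2 x3; apply: rep_unique_low_v.
have def_M : a * (b - r * e - 1) + a + r * e * a = a * b.
  by rewrite -mulnSr [_ * a]mulnC -mulnDr; congr (_ * _); lia.
have def_afv : (a + f - v - 1) * b = (f - v - 1) * b + a * b.
  by rewrite -mulnDl; congr (_ * _); lia.
have def_af : (a + f - 1) * b = (a + f - v - 1) * b + v * b.
  by rewrite -mulnDl; congr (_ * _); lia.
have def_r1ea : (r + 1) * e * a = r * e * a + e * a.
  by rewrite -!mulnA mulnDl mul1n.
by move=> t lt_ta; apply: two_reps_below_narrow => //; lia.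
Qed.

End NarrowF.

Lemma fibSS n : fib n.+2 = fib n.+1 + fib n.
Proof. by []. Qed.

Lemma fib_addSS i k : fib (i + k.+2) + fib k * fib i = fib k.+2 * fib i.+2.
Proof.
suff : fib (i + k.+2) + fib k * fib i = fib k.+2 * fib i.+2 /\
       fib (i + k.+3) + fib k.+1 * fib i = fib k.+3 * fib i.+2 by case.
elim: k => [|k [IHk IHk1]]; first by rewrite addn2 addn3 /= !mul1n; lia.
split=> //; rewrite !addnS in IHk IHk1 *.
rewrite (fibSS (i + k).+2) (fibSS k) mulnDl.
have -> : fib k.+4 = fib k.+3 + fib k.+2 by [].
by rewrite mulnDl; lia.
Qed.

Lemma fib_add i k : 2 <= k ->
  fib (i + k) + fib (k - 2) * fib i = fib k * fib (i + 2).
Proof. by case: k => [|[|k]] // _; rewrite subn2 addn2 fib_addSS. Qed.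

Lemma leq_fibS n : fib n <= fib n.+1.
Proof. by case: n => // n; rewrite fibSS leq_addr. Qed.

Lemma leq_fib m n : m <= n -> fib m <= fib n.
Proof.
move=> /subnK <-; elim: (n - m) => // d IHd.
by rewrite addSn (leq_trans IHd) ?leq_fibS.
Qed.

Lemma fib_gt0 n : 0 < n -> 0 < fib n.
Proof. by move=> n_gt0; apply: leq_trans (leq_fib n_gt0). Qed.

Lemma coprime_fibS n : coprime (fib n) (fib n.+1).
Proof. by elim: n => // n IHn; rewrite /coprime fibSS gcdnDl gcdnC. Qed.

Lemma coprime_fib_addn2 n : coprime (fib n) (fib (n + 2)).
Proof. by rewrite addn2 /coprime fibSS gcdnDr; apply: coprime_fibS. Qed.

Lemma fib_sub2 n : 1 < n -> fib n = fib (n - 1) + fib (n - 2).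
Proof. by case: n => [|[|n]] // _; rewrite subn1 subn2. Qed.

Lemma fib_addn2 n : 0 < n -> fib (n + 2) = 2 * fib n + fib (n - 1).
Proof.
case: n => // n _; rewrite addn2 fibSS subSS subn0.
by case: n => [|n] //; rewrite (fibSS n.+1); lia.
Qed.

Local Open Scope ring_scope.

Lemma pFrobenius1_fib_far i k : (3 <= i)%N -> (i + 2 <= k)%N ->
  is_pFrobenius 1 [:: fib i; fib (i + 2); fib (i + k)]
    ((2 * (fib i)%:Z - 1) * (fib (i + 2))%:Z - (fib i)%:Z).
Proof.
move=> le3i le_i2k.
have def_a := fib_sub2 (ltnW le3i); have def_b := fib_addn2 (ltnW (ltnW le3i)).
have le_dh : (fib (i - 2) <= fib (i - 1))%N by apply: leq_fib; lia.
have d_gt0 : (0 < fib (i - 2))%N by apply: fib_gt0; lia.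
have le_c : (fib (i + (i + 2)) <= fib (i + k))%N by apply: leq_fib; lia.
have fib_2i2 := fib_add i (leq_addl i 2); rewrite addnK in fib_2i2.
have le_sq : (fib i * fib i + 2 * (fib i * fib (i + 2))
              <= fib (i + 2) * fib (i + 2))%N.
  have : (fib i * fib i <= fib i * (2 * fib (i - 1)))%N.
    by rewrite leq_mul2l; apply/orP; right; lia.
  by rewrite def_b; lia.
by apply: pFrobenius1_large_third; rewrite ?fib_gt0 ?coprime_fib_addn2 //; lia.
Qed.

Lemma pFrobenius1_fib_2i1 i : (3 <= i)%N ->
  is_pFrobenius 1 [:: fib i; fib (i + 2); fib (2 * i + 1)]
    (((fib (i - 2))%:Z - 1) * (fib (i + 2))%:Z + (fib (2 * i + 1))%:Z
       - (fib i)%:Z).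
Proof.
move=> le3i; rewrite (_ : (2 * i + 1 = i + (i + 1))%N); last lia.
have def_a := fib_sub2 (ltnW le3i); have def_b := fib_addn2 (ltnW (ltnW le3i)).
have def_f : fib (i + 1) = (fib i + fib (i - 1))%N.
  rewrite (fib_sub2 (_ : 1 < i + 1)%N) ?addnK; last lia.
  by congr (_ + fib _); lia.
have le_h2d : (fib (i - 1) <= 2 * fib (i - 2))%N.
  rewrite (fib_sub2 (_ : 1 < i - 1)%N); last lia.
  have : (fib (i - 1 - 2) <= fib (i - 2))%N by apply: leq_fib; lia.
  rewrite (_ : (i - 1 - 1 = i - 2)%N); lia.
have d_gt0 : (0 < fib (i - 2))%N by apply: fib_gt0; lia.
have def_c := fib_add i (leq_trans (ltnW le3i) (leq_addr 1 i)).
rewrite (_ : (i + 1 - 2 = i - 1)%N) in def_c; last lia.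
rewrite (_ : (fib (i - 2))%:Z = 2 * (fib i)%:Z - (fib (i + 1))%:Z); last first.
  by rewrite def_f {2}def_a !PoszD; lia.
apply: (pFrobenius1_wide_f (coprime_fib_addn2 i) def_c); rewrite ?fib_gt0 //;
  try lia.
rewrite def_f def_b addKn addnK.
have : (fib (i - 1) * fib (i - 1) <= fib (i - 1) * (2 * fib (i - 2)))%N.
  by rewrite leq_mul2l le_h2d orbT.
rewrite def_a; lia.
Qed.

Lemma pFrobenius1_fib_2i i : (3 <= i)%N ->
  is_pFrobenius 1 [:: fib i; fib (i + 2); fib (2 * i)]
    (((fib i)%:Z - 1) * (fib (i + 2))%:Z + (fib (2 * i))%:Z - (fib i)%:Z).
Proof.
move=> le3i; rewrite (_ : (2 * i = i + i)%N); last lia.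
have def_b := fib_addn2 (ltnW (ltnW le3i)).
have a_gt0 : (0 < fib i)%N by apply: fib_gt0; lia.
have le_ea : (fib (i - 2) <= fib i)%N by apply: leq_fib; lia.
rewrite (_ : (fib i)%:Z - 1 = 2 * (fib i)%:Z - (fib i)%:Z - 1); last lia.
apply: (pFrobenius1_wide_f (coprime_fib_addn2 i) (fib_add i (ltnW le3i))) => //.
  lia.
by rewrite subnn mul0n.
Qed.

Lemma pFrobenius1_fib_near i k r : (0 < i)%N -> (3 <= k)%N ->
  r = ((fib i).-1 %/ fib k)%N -> (1 <= r)%N ->
  ((fib (k - 2))%:Z * (fib i)%:Z
       <= ((fib i)%:Z - r%:Z * (fib k)%:Z) * (fib (i + 2))%:Z ->
     is_pFrobenius 1 [:: fib i; fib (i + 2); fib (i + k)]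
       (((fib i)%:Z - r%:Z * (fib k)%:Z - 1) * (fib (i + 2))%:Z
          + (r%:Z + 1) * (fib (i + k))%:Z - (fib i)%:Z)) /\
  (((fib i)%:Z - r%:Z * (fib k)%:Z) * (fib (i + 2))%:Z
       < (fib (k - 2))%:Z * (fib i)%:Z ->
     is_pFrobenius 1 [:: fib i; fib (i + 2); fib (i + k)]
       (((fib k)%:Z - 1) * (fib (i + 2))%:Z
          + r%:Z * (fib (i + k))%:Z - (fib i)%:Z)).
Proof.
move=> i_gt0 le3k def_r r_gt0.
have def_b := fib_addn2 i_gt0.
have e_gt0 : (0 < fib (k - 2))%N by apply: fib_gt0; lia.
have le_2ef : (2 * fib (k - 2) <= fib k)%N.
  rewrite (fib_sub2 (ltnW le3k)); have : (fib (k - 2) <= fib (k - 1))%N.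
    by apply: leq_fib; lia.
  lia.
have le_rfa : (r * fib k <= (fib i).-1)%N by rewrite def_r leq_trunc_div.
have lt_ar1f : ((fib i).-1 < r.+1 * fib k)%N.
  by rewrite def_r ltn_ceil ?fib_gt0; lia.
have le_fr : (fib k <= r * fib k)%N by rewrite leq_pmull.
set v := (fib i - r * fib k)%N.
have def_a : fib i = (r * fib k + v)%N by rewrite /v; lia.
have v_gt0 : (0 < v)%N by rewrite /v; lia.
have le_vf : (v <= fib k)%N by move: lt_ar1f; rewrite /v mulSn; lia.
have vZ : (fib i)%:Z - r%:Z * (fib k)%:Z = v%:Z.
  by rewrite def_a PoszD PoszM addrAC subrr add0r.
have le_2ab : (2 * fib i <= fib (i + 2))%N by rewrite def_b leq_addr.
have lt_afb : (fib i + fib k < fib (i + 2))%N by rewrite def_b; lia.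
have cop_ab := coprime_fib_addn2 i; have def_c := fib_add i (ltnW le3k).
rewrite vZ -!PoszM lez_nat ltz_nat; split=> [le_ea_vb | lt_vb_ea].
  exact: (pFrobenius1_narrow_high_v cop_ab def_c def_a).
exact: (pFrobenius1_narrow_low_v cop_ab def_c def_a).
Qed.

Theorem theorem2 (i k : nat) (hi : (3 <= i)%N) (hk : (3 <= k)%N) :
  (* (a) *)
  ((i + 2 <= k)%N ->
     is_pFrobenius 1 [:: fib i; fib (i + 2); fib (i + k)]
       ((2 * (fib i)%:Z - 1) * (fib (i + 2))%:Z - (fib i)%:Z)) /\
  (* (b) *)
  is_pFrobenius 1 [:: fib i; fib (i + 2); fib (2 * i + 1)]
    (((fib (i - 2))%:Z - 1) * (fib (i + 2))%:Z + (fib (2 * i + 1))%:Z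
       - (fib i)%:Z) /\
  (* (c) *)
  is_pFrobenius 1 [:: fib i; fib (i + 2); fib (2 * i)]
    (((fib i)%:Z - 1) * (fib (i + 2))%:Z + (fib (2 * i))%:Z - (fib i)%:Z) /\
  (* (d) *)
  (let r := ((fib i).-1 %/ fib k)%N in
   (1 <= r)%N ->
   ((fib (k - 2))%:Z * (fib i)%:Z
       <= ((fib i)%:Z - r%:Z * (fib k)%:Z) * (fib (i + 2))%:Z ->
     is_pFrobenius 1 [:: fib i; fib (i + 2); fib (i + k)]
       (((fib i)%:Z - r%:Z * (fib k)%:Z - 1) * (fib (i + 2))%:Z
          + (r%:Z + 1) * (fib (i + k))%:Z - (fib i)%:Z)) /\
   (((fib i)%:Z - r%:Z * (fib k)%:Z) * (fib (i + 2))%:Z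
       < (fib (k - 2))%:Z * (fib i)%:Z ->
     is_pFrobenius 1 [:: fib i; fib (i + 2); fib (i + k)]
       (((fib k)%:Z - 1) * (fib (i + 2))%:Z
          + r%:Z * (fib (i + k))%:Z - (fib i)%:Z))).
Proof.
split; first exact: pFrobenius1_fib_far.
split; first exact: pFrobenius1_fib_2i1.
split; first exact: pFrobenius1_fib_2i.
by move=> r; apply: pFrobenius1_fib_near => //; apply: leq_trans hi.
Qed.
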